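(* Let $\alpha$ be an equidistributed infinite permutation with $p_{\alpha}(n)=n$ for all $n\ge1$. Then the underlying word $s$ of $\alpha$ is aperiodic (not ultimately periodic).
   Context: An infinite permutation is an equivalence class of sequences of pairwise distinct reals under $a\sim b\iff(a[i]<a[j]\Leftrightarrow b[i]<b[j]\ \forall i,j)$; write $\alpha=(\alpha[n])_{n\ge0}$ with the induced order. $p_\alpha(n)$ is the number of distinct factors $\alpha[i..i+n-1]$ of length $n$, each regarded as a finite permutation (relative order). A sequence $(a[n])$ in $[0,1]$ is equidistributed if $\lim_{n\to\infty}\frac{\#\{0\le i<n:a[i]<t\}}{n}=t$ for each $t\in[0,1]$; a permutation is equidistributed if it has an equidistributed representative in $[0,1]$. The underlying word of $\alpha$ is the infinite binary word $s$ with $s[i]=0$ if $\alpha[i]<\alpha[i+1]$ and $s[i]=1$ otherwise. An infinite word is ultimately periodic if it equals $vwww\cdots$ for finite words $v,w$ with $w$ nonempty. *)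

From HB Require Import structures.
From mathcomp Require Import all_boot all_order all_algebra.
From mathcomp Require Import all_classical all_reals topology normedtype sequences.
Set Implicit Arguments. Unset Strict Implicit. Unset Printing Implicit Defensive.
Import Order.TTheory GRing.Theory Num.Theory.
Local Open Scope ring_scope.
Local Open Scope classical_set_scope.
Import numFieldNormedType.Exports.

(* An infinite permutation alpha is given by a representative sequence
   a : nat -> R of pairwise distinct reals (R : realType). *)
Definition distinct_seq (R : realType) (a : nat -> R) : Prop := injective a.

(* a and b represent the same infinite permutation *)
Definition order_equiv (R : realType) (a b : nat -> R) : Prop :=
  forall i j : nat, (a i < a j) <-> (b i < b j).

(* The factor alpha[i..i+n-1], regarded as a finite permutation, i.e. as the
   relative order of its n entries: the relation (j,k) |-> a(i+j) < a(i+k). *)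
Definition factor_pattern (R : realType) (a : nat -> R) (i n : nat)
  : {ffun 'I_n * 'I_n -> bool} :=
  [ffun jk : 'I_n * 'I_n => a (i + jk.1)%N < a (i + jk.2)%N].

Definition complexity_is (R : realType) (a : nat -> R) (n k : nat) : Prop :=
  exists S : {set {ffun 'I_n * 'I_n -> bool}},
    (forall x, x \in S <-> exists i : nat, factor_pattern a i n = x)
    /\ #|S| = k.

Definition equidistributed_seq (R : realType) (a : nat -> R) : Prop :=
  (forall i, 0 <= a i <= 1) /\
  forall t : R, 0 <= t <= 1 ->
    (fun n : nat => ((count (fun i => a i < t) (iota 0 n))%:R / n%:R : R))
      @ \oo --> t.

Definition equidistributed_perm (R : realType) (a : nat -> R) : Prop :=
  exists b : nat -> R, distinct_seq b /\ order_equiv a b /\ equidistributed_seq b.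

(* underlying word: s[i] = 0 (false) if a i < a (i+1), 1 (true) otherwise *)
Definition underlying_word (R : realType) (a : nat -> R) : nat -> bool :=
  fun i => ~~ (a i < a i.+1).

(* s = v w w w ... with w nonempty *)
Definition ultimately_periodic (s : nat -> bool) : Prop :=
  exists v w : seq bool, w != [::] /\
    forall i : nat,
      s i = if (i < size v)%N then nth false v i
            else nth false w ((i - size v) %% size w)%N.

(* If the underlying word were ultimately periodic, take its minimal period p,
   valid from position N.  Factors of length p+1 starting at N + r + k p carry
   the length-p word starting at N + r, and by minimality these words differ
   for the p residues r, so they already account for p of the p+1 factors.
   Hence (for p >= 2; for p = 1 the sign below is a letter of the word) some
   residue r has all its factors agree on the comparison of their first and
   last entries, i.e. alpha[N + r + k p] is strictly monotone in k.  But a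
   strictly monotone sequence in [0,1] eventually stays in arbitrarily short
   intervals, whereas an equidistributed representative must put a density
   1/p of its terms there. *)

From mathcomp Require Import all_boot all_order all_algebra.
From mathcomp Require Import all_classical all_reals topology normedtype sequences.
From mathcomp Require Import lra zify.
Set Implicit Arguments. Unset Strict Implicit. Unset Printing Implicit Defensive.
Import Order.TTheory GRing.Theory Num.Theory.
Import numFieldNormedType.Exports.

Definition periodic_from (s : nat -> bool) (p N : nat) : Prop :=
  forall i, N <= i -> s (i + p) = s i.

Lemma periodic_from_mul (s : nat -> bool) (p N k i : nat) :
  periodic_from s p N -> N <= i -> s (i + k * p) = s i.
Proof.
move=> per; elim: k i => [|k IH] i Ni; first by rewrite addn0.
by rewrite mulSn addnCA addnC per ?IH // (leq_trans Ni) ?leq_addr.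
Qed.

Lemma periodic_window_shift (s : nat -> bool) (p N i i' : nat) :
  0 < p -> periodic_from s p N -> N <= i <= i' ->
  (forall j, j < p -> s (i + j) = s (i' + j)) -> periodic_from s (i' - i) i.
Proof.
move=> p_gt0 per /andP[Ni ii'] window m im.
have Ni' := leq_trans Ni ii'.
have -> : m = i + (m - i) %% p + (m - i) %/ p * p by have := divn_eq (m - i) p; lia.
have -> : i + (m - i) %% p + (m - i) %/ p * p + (i' - i) =
          i' + (m - i) %% p + (m - i) %/ p * p by lia.
rewrite !(periodic_from_mul _ per) ?(leq_trans _ (leq_addr _ _)) //.
by rewrite window ?ltn_mod.
Qed.

Lemma ultimately_periodic_min_period (s : nat -> bool) :
  ultimately_periodic s ->
  exists p N, [/\ 0 < p, periodic_from s p N &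
    forall m N', 0 < m -> periodic_from s m N' -> p <= m].
Proof.
move=> [v [w [w_nil sE]]].
have : exists p, `[< 0 < p /\ exists N, periodic_from s p N >].
  exists (size w); apply/asboolP; split; first by rewrite lt0n size_eq0.
  exists (size v) => i vi; rewrite !sE ltnNge (leq_trans vi) ?leq_addr //.
  by rewrite ltnNge vi /= -addnBAC // modnDr.
case/ex_minnP=> p /asboolP[p_gt0 [N per]] p_min.
exists p, N; split=> // m N' m_gt0 per'.
by apply: p_min; apply/asboolP; split; last by exists N'.
Qed.

Section FactorPatterns.
Variables (R : realType) (a : nat -> R).

Lemma factor_pattern_eq_word (p i i' : nat) :
  factor_pattern a i p.+1 = factor_pattern a i' p.+1 ->
  forall j, j < p -> underlying_word a (i + j) = underlying_word a (i' + j).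
Proof.
move=> e j jp.
have := congr1 (fun f : {ffun 'I_p.+1 * 'I_p.+1 -> bool} =>
  f (Ordinal (leqW jp), Ordinal (jp : j.+1 < p.+1))) e.
by rewrite !ffunE /= /underlying_word -!addnS => ->.
Qed.

Lemma factor_pattern_eq_ends (p i i' : nat) :
  factor_pattern a i p.+1 = factor_pattern a i' p.+1 ->
  (a i < a (i + p))%R = (a i' < a (i' + p))%R.
Proof.
move=> e.
have := congr1 (fun f : {ffun 'I_p.+1 * 'I_p.+1 -> bool} => f (ord0, ord_max)) e.
by rewrite !ffunE /= !addn0.
Qed.

Variables (p N : nat).
Hypothesis p_gt0 : 0 < p.
Hypothesis word_periodic : periodic_from (underlying_word a) p N.
Hypothesis p_min : forall m N', 0 < m -> periodic_from (underlying_word a) m N' -> p <= m.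

Lemma factor_pattern_residue_inj (r r' k k' : nat) : r < p -> r' < p ->
  factor_pattern a (N + r + k * p) p.+1 = factor_pattern a (N + r' + k' * p) p.+1 ->
  r = r'.
Proof.
wlog rr' : r r' k k' / r <= r'.
  move=> wlog_rr' rp r'p e; case: (leqP r r') => [rr'|r'r]; first exact: wlog_rr' e.
  by apply/esym/(wlog_rr' r' r k' k) => //; apply: ltnW.
move=> rp r'p e; apply/eqP; rewrite eqn_leq rr' /= leqNgt; apply/negP => lt_rr'.
suff /p_min : periodic_from (underlying_word a) (r' - r) (N + r).
  by rewrite subn_gt0 => /(_ lt_rr'); lia.
rewrite -(subnDl N); apply: (periodic_window_shift p_gt0 word_periodic).
  by rewrite leq_addr leq_add2l.
move=> j jp; have := factor_pattern_eq_word e jp.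
by rewrite (addnAC (N + r)) (addnAC (N + r')) !(periodic_from_mul _ word_periodic) //; lia.
Qed.

Lemma progression_sign_constant : complexity_is a p.+1 p.+1 ->
  exists i0, forall k,
    (a (i0 + k * p) < a (i0 + k.+1 * p))%R = (a i0 < a (i0 + p))%R.
Proof.
move=> [S [S_factors S_card]].
have stepE i k : i + k.+1 * p = i + k * p + p by rewrite mulSn addnA addnAC.
case: (leqP p 1) => [p_le1 | p_gt1].
  have p1 : p = 1 by lia.
  have ltE i : (a i < a (i + 1))%R = ~~ underlying_word a i.
    by rewrite /underlying_word negbK addn1.
  exists N => k; rewrite stepE.
  by move: (periodic_from_mul k word_periodic (leqnn N)); rewrite p1 muln1 !ltE => ->.
apply: contrapT => no_const.
have jump (r : 'I_p) : exists k,
    (a (N + r + k * p) < a (N + r + k * p + p))%R != (a (N + r) < a (N + r + p))%R.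
  apply: contrapT => const; apply: no_const; exists (N + r) => k.
  by rewrite stepE; apply/eqP; apply: contrapT => jump_k; apply: const; exists k; apply/negP.
have [g gP] := boolp.choice jump.
pose f (u : 'I_p + 'I_p) := match u with
  | inl r => factor_pattern a (N + r + 0 * p) p.+1
  | inr r => factor_pattern a (N + r + g r * p) p.+1 end.
have f_mixed (r r' : 'I_p) : f (inl r) <> f (inr r').
  move=> /= e; have rr' := factor_pattern_residue_inj (ltn_ord r) (ltn_ord r') e.
  move: e; rewrite (val_inj rr') => /factor_pattern_eq_ends.
  by rewrite mul0n addn0 => e; move: (gP r'); rewrite e eqxx.
have f_inj : injective f.
  case=> r [r'|r'] e; [congr inl | by case: (f_mixed _ _ e) |
    by case: (f_mixed _ _ (esym e)) | congr inr];
  exact/val_inj/(factor_pattern_residue_inj (ltn_ord r) (ltn_ord r') e).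
have : f @: [set: 'I_p + 'I_p] \subset S.
  by apply/fintype.subsetP => _ /imsetP[[r|r] _ ->]; apply/S_factors; eexists.
move/subset_leq_card; rewrite card_imset // cardsT card_sum card_ord S_card.
lia.
Qed.
End FactorPatterns.

Section Equidistribution.
Variable R : realType.
Local Open Scope ring_scope.
Local Open Scope classical_set_scope.

Lemma count_lt_split (b : nat -> R) (t1 t2 : R) (s : seq nat) : t1 <= t2 ->
  count (fun i => b i < t2) s =
  (count (fun i => (b i < t1)%R) s + count (fun i => (t1 <= b i < t2)%R) s)%N.
Proof.
move=> t12; elim: s => //= i s ->; case: (ltP (b i) t1) => [bt1|] /=.
  by rewrite (lt_le_trans bt1 t12) addnA.
by case: (b i < t2); rewrite /= ?addnA // (addnC 1%N).
Qed.

Lemma equidistributed_interval_frequency (b : nat -> R) (t1 t2 : R) :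
  equidistributed_seq b -> 0 <= t1 -> t1 <= t2 -> t2 <= 1 ->
  (fun n => (count (fun i => t1 <= b i < t2) (iota 0 n))%:R / n%:R)
    @ \oo --> t2 - t1.
Proof.
move=> [_ freq] t1_ge0 t12 t2_le1.
have t1_01 : 0 <= t1 <= 1 by rewrite t1_ge0 (le_trans t12).
have t2_01 : 0 <= t2 <= 1 by rewrite t2_le1 (le_trans t1_ge0).
apply: cvg_trans (cvgB (freq t2 t2_01) (freq t1 t1_01)).
apply: near_eq_cvg; near=> n => /=.
by rewrite !fctE (count_lt_split _ _ t12) natrD mulrDl addrAC subrr add0r.
Unshelve. all: end_near.
Qed.

Lemma count_progression_lb (P : pred nat) (i0 p K M : nat) : (0 < p)%N ->
  (forall k, (K <= k)%N -> P (i0 + k * p)%N) ->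
  (M - K <= count P (iota 0 (i0 + M * p)))%N.
Proof.
move=> p_gt0 PK; elim: M => [|M IH]; first by rewrite sub0n.
case: (ltnP M K) => [MK|KM]; first by move: MK; rewrite -subn_eq0 => /eqP ->.
rewrite mulSn addnCA addnC iotaD count_cat add0n.
rewrite -[X in iota (_ + _) X](prednK p_gt0) /= PK //; lia.
Qed.

Lemma equidistributed_progression_spread (b : nat -> R) (i0 p K : nat) (t1 t2 : R) :
  equidistributed_seq b -> (0 < p)%N -> 0 <= t1 -> t2 <= 1 ->
  t2 - t1 <= (4 * p%:R)^-1 ->
  ~ (forall k, (K <= k)%N -> t1 < b (i0 + k * p)%N < t2).
Proof.
move=> equi p_gt0 t1_ge0 t2_le1 width inside.
have /andP[t1b bt2] := inside K (leqnn K).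
have t12 : t1 <= t2 by rewrite ltW // (lt_trans t1b).
have e_gt0 : 0 < (4 * p%:R)^-1 :> R by rewrite invr_gt0 -natrM ltr0n muln_gt0.
have /cvgr_dist_lt /(_ _ e_gt0) [N _ freqN] :=
  equidistributed_interval_frequency equi t1_ge0 t12 t2_le1.
set P := fun i => t1 <= b i < t2.
pose M := (N + 2 * K + i0).+1.
pose n := (i0 + M * p)%N.
have n_gt0 : (0 < n)%N by rewrite addn_gt0 muln_gt0 p_gt0 orbT.
have cnt : (M - K <= count P (iota 0 n))%N.
  by apply: count_progression_lb => // k /inside /andP[? ?]; rewrite /P ltW.
(* by the choice of M, the progression alone has frequency >= 1/(2p) up to n *)
have lb : (n <= 2 * p * count P (iota 0 n))%N.
  by apply: leq_trans (leq_mul (leqnn (2 * p)) cnt); rewrite /n /M; nia.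
have Nn : (N <= n)%N by rewrite /n /M; nia.
have := freqN n Nn; rewrite ltr_distlC => /andP[_].
have e4p : (4 * p%:R)^-1 * (4 * p%:R) = 1 :> R.
  by rewrite mulVf // -natrM pnatr_eq0 muln_eq0 -lt0n p_gt0.
have n_pos : 0 < n%:R :> R by rewrite ltr0n.
have p_pos : 0 < p%:R :> R by rewrite ltr0n.
move: lb; rewrite -(ler_nat R) !natrM -/n.
set c := count P (iota 0 n); move: e4p width e_gt0.
set e := (4 * p%:R)^-1; move=> e4p width e_gt0 lb.
have : 1 <= 2 * p%:R * (c%:R / n%:R) :> R.
  by rewrite mulrA ler_pdivlMr // mul1r.
move: (c%:R / n%:R) => x; nra.
Qed.

Lemma increasing_eventually_in_small_interval (c : nat -> R) (eps : R) :
  (forall k, 0 <= c k <= 1) -> (forall k, c k < c k.+1) -> 0 < eps ->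
  exists t1 t2 K, [/\ 0 <= t1, t2 <= 1, t2 - t1 <= eps &
    forall k, (K <= k)%N -> t1 < c k < t2].
Proof.
move=> c01 c_incr eps_gt0.
have c_lt : {homo c : i j / (i < j)%N >-> i < j} := homo_ltn lt_trans c_incr.
have supc : has_sup (range c).
  by split; [exists (c 0%N), 0%N | exists 1 => _ [k _ <-]; case/andP: (c01 k)].
have [_ [K _ <-] cK] := sup_adherent eps_gt0 supc.
have c_lt_sup k : c k < sup (range c).
  by apply: lt_le_trans (c_incr k) _; apply: sup_upper_bound => //; exists k.+1.
exists (Num.max 0 (sup (range c) - eps)), (sup (range c)), K.+1; split.
- by rewrite le_max lexx.
- by apply: ge_sup; [exists (c 0%N), 0%N | move=> _ [k _ <-]; case/andP: (c01 k)].
- by rewrite lerBlDr -lerBlDl le_max lexx orbT.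
- move=> k Kk; rewrite c_lt_sup andbT; apply: le_lt_trans (c_lt _ _ Kk).
  by rewrite ge_max (ltW cK) andbT; case/andP: (c01 K).
Qed.

Lemma monotone_eventually_in_small_interval (c : nat -> R) (eps : R) :
  (forall k, 0 <= c k <= 1) ->
  (forall k, c k < c k.+1) \/ (forall k, c k.+1 < c k) -> 0 < eps ->
  exists t1 t2 K, [/\ 0 <= t1, t2 <= 1, t2 - t1 <= eps &
    forall k, (K <= k)%N -> t1 < c k < t2].
Proof.
move=> c01 [c_incr|c_decr] eps_gt0.
  exact: increasing_eventually_in_small_interval.
have c'01 k : 0 <= 1 - c k <= 1 by case/andP: (c01 k) => ? ?; apply/andP; split; lra.
have c'_incr k : 1 - c k < 1 - c k.+1 by rewrite ltrD2l ltrN2.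
have [t1 [t2 [K [t1_ge0 t2_le1 width inside]]]] :=
  increasing_eventually_in_small_interval (c := fun k => 1 - c k) c'01 c'_incr eps_gt0.
exists (1 - t2), (1 - t1), K; split; [lra | lra | lra |].
by move=> k /inside /andP[? ?]; apply/andP; split; lra.
Qed.

Lemma equidistributed_progression_not_monotone (b : nat -> R) (i0 p : nat) :
  equidistributed_seq b -> (0 < p)%N ->
  ~ ((forall k, b (i0 + k * p)%N < b (i0 + k.+1 * p)%N) \/
     (forall k, b (i0 + k.+1 * p)%N < b (i0 + k * p)%N)).
Proof.
move=> equi p_gt0 mono.
have e_gt0 : 0 < (4 * p%:R)^-1 :> R by rewrite invr_gt0 -natrM ltr0n muln_gt0.
have [t1 [t2 [K [t1_ge0 t2_le1 width inside]]]] :=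
  monotone_eventually_in_small_interval (fun k => equi.1 _) mono e_gt0.
exact: equidistributed_progression_spread equi p_gt0 t1_ge0 t2_le1 width inside.
Qed.
End Equidistribution.

Lemma constant_sign_monotone d (T : orderType d) (c : nat -> T) : injective c ->
  (forall k, (c k < c k.+1)%O = (c 0 < c 1)%O) ->
  (forall k, (c k < c k.+1)%O) \/ (forall k, (c k.+1 < c k)%O).
Proof.
move=> c_inj sign; case: (boolP (c 0 < c 1)%O) => c01; [left|right] => k.
  by rewrite sign.
move: (sign k); rewrite (negbTE c01) => /negbT.
by rewrite -leNgt le_eqVlt => /orP[/eqP/c_inj/esym/n_Sn|].
Qed.

Theorem proposition6 (R : realType) (a : nat -> R) :
  distinct_seq a ->
  equidistributed_perm a ->
  (forall n : nat, (1 <= n)%N -> complexity_is a n n) ->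
  ~ ultimately_periodic (underlying_word a).
Proof.
move=> _ [b [b_inj [ab equi]]] complexity /ultimately_periodic_min_period.
move=> [p [N [p_gt0 word_periodic p_min]]].
have [i0 sign] :=
  progression_sign_constant p_gt0 word_periodic p_min (complexity p.+1 isT).
apply: (equidistributed_progression_not_monotone (i0 := i0) equi p_gt0).
have abE i j : (a i < a j)%R = (b i < b j)%R by apply/idP/idP => /ab.
apply: (constant_sign_monotone (c := fun k => b (i0 + k * p))).
  by move=> k k' /b_inj /addnI /eqP; rewrite eqn_pmul2r // => /eqP.
by move=> k /=; rewrite -!abE sign mul0n addn0 mul1n.
Qed.
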